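(* Let $Z$ be a uniform read-$d$-times NBP and let $X\subseteq V(Z)$ separate two disjoint subsets $Y_1,Y_2$ of $Vars(Z)$. Let $Y'_1\subseteq Y_1$, $Y'_2\subseteq Y_2$, let $S$ be an assignment (set of literals) to $Vars(Z)\setminus(Y_1\cup Y_2)$, and let $Q',Q''$ be computational paths of $Z$ passing through all vertices of $X$ with $S\subseteq A(Q')\cap A(Q'')$, such that $Q'$ assigns all variables of $Y'_1$ negatively and $Q''$ assigns all variables of $Y'_2$ negatively. Then there is a computational path $Q^*$ of $Z$ passing through all vertices of $X$ with $S\subseteq A(Q^* )$ that assigns all variables of $Y'_1\cup Y'_2$ negatively.
   Context: An NBP $Z$ is a directed acyclic multigraph with one source and one sink, some edges labelled with literals; $Vars(Z)$ is the set of variables labelling edges. A source-sink path $P$ is computational if no variable occurs on it with both signs; $A(P)$ is the set of literals labelling its edges; $P$ assigns a variable $y$ negatively if $\neg y\in A(P)$. Read-$d$-times: each variable labels at most $d$ edges of each source-sink path; uniform: exactly $d$. A partition of a path $P$ is a sequence $P_1,\dots,P_c$ of subpaths with $P_1$ a prefix, $P_c$ a suffix, and the first vertex of $P_i$ equal to the last vertex of $P_{i-1}$; the set $X$ of the ends of $P_1,\dots,P_{c-1}$ generates this partition. A set $X\subseteq V(Z)$ not containing the source or sink separates disjoint sets $Y_1,Y_2$ of variables if there is a computational path $P$ through all vertices of $X$ such that, in the partition $P_1,\dots,P_{|X|+1}$ generated by $X$ on $P$, either variables of $Y_1$ label edges only of $P_i$ with $i$ odd and variables of $Y_2$ only of $P_i$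 with $i$ even, or vice versa. *)

From mathcomp Require Import all_boot.
Set Implicit Arguments. Unset Strict Implicit. Unset Printing Implicit Defensive.

(* A literal over variables of type Var is a pair (x, b): b = true is the
   positive literal x, b = false is the negative literal ~x. *)
Definition literal (Var : finType) := (Var * bool)%type.

(* The data of a labelled directed multigraph with distinguished source and
   sink: edge e goes from [tl e] to [hd e]; [lab e = None] means unlabelled. *)
Record nbp (Var : finType) := NBP {
  vtx : finType;
  edge : finType;
  tl : edge -> vtx;
  hd : edge -> vtx;
  lab : edge -> option (literal Var);
  src : vtx;
  snk : vtx }.

Section NBPDefs.
Variable Var : finType.
Variable Z : nbp Var.

Local Notation V := (vtx Z).
Local Notation E := (edge Z).

Fixpoint is_walk (u : V) (p : seq E) : bool :=
  match p with
  | [::] => true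
  | e :: p' => (tl e == u) && is_walk (hd e) p'
  end.

Definition walk_vertices (u : V) (p : seq E) : seq V := u :: map (@hd _ Z) p.

Definition is_source (v : V) : Prop := forall e : E, hd e <> v.
Definition is_sink (v : V) : Prop := forall e : E, tl e <> v.

Definition nbp_wf : Prop :=
  (forall (v : V) (p : seq E), is_walk v p -> last v (map (@hd _ Z) p) = v ->
      p = [::]) /\
  (forall v : V, is_source v <-> v = src Z) /\
  (forall v : V, is_sink v <-> v = snk Z).

Definition st_path (p : seq E) : bool :=
  is_walk (src Z) p && (last (src Z) (map (@hd _ Z) p) == snk Z).

Definition var_of (e : E) : option Var := omap fst (lab e).

Definition Vars : {set Var} := [set x | [exists e, var_of e == Some x]].

Definition lits (p : seq E) : {set literal Var} :=
  [set l | has (fun e => lab e == Some l) p].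

Definition computational (p : seq E) : bool :=
  [forall x : Var, ~~ (((x, true) \in lits p) && ((x, false) \in lits p))].

Definition assigns_neg (p : seq E) (x : Var) : bool := (x, false) \in lits p.

Definition uniform_read (d : nat) : Prop :=
  forall p : seq E, st_path p ->
    forall x : Var, x \in Vars -> count (fun e => var_of e == Some x) p = d.

Definition through (X : {set V}) (p : seq E) : bool :=
  [forall x in X, x \in walk_vertices (src Z) p].

(* The partition of a path generated by X: the path is cut at every visited
   vertex of X.  [split_at X p] is the list [P_1; ...; P_c] of subpaths. *)
Fixpoint split_at (X : {set V}) (p : seq E) : seq (seq E) :=
  match p with
  | [::] => [:: [::]]
  | e :: p' =>
      let r := split_at X p' in
      if hd e \in X then [:: e] :: r
      else match r with
           | c :: r' => (e :: c) :: r'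
           | [::] => [:: [:: e]]
           end
  end.

(* In the partition, variables of A label edges only of P_i with i odd and
   variables of B only of P_i with i even (P_i is the (i-1)-th element,
   0-based, of [split_at X p]). *)
Definition odd_even_split (X : {set V}) (p : seq E) (A B : {set Var}) : Prop :=
  forall (i : nat) (e : E), e \in nth [::] (split_at X p) i ->
    forall x : Var, var_of e = Some x ->
      (x \in A -> odd i.+1) /\ (x \in B -> ~~ odd i.+1).

Definition separates (X : {set V}) (Y1 Y2 : {set Var}) : Prop :=
  src Z \notin X /\ snk Z \notin X /\
  exists p : seq E, [/\ st_path p, computational p, through X p &
    odd_even_split X p Y1 Y2 \/ odd_even_split X p Y2 Y1].

End NBPDefs.

Definition is_assignment (Var : finType) (S : {set literal Var}) (W : {set Var})
  : Prop :=
  (forall l, l \in S -> l.1 \in W) /\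
  (forall x, x \in W -> ((x, true) \in S) || ((x, false) \in S)) /\
  (forall x, ~~ (((x, true) \in S) && ((x, false) \in S))).

From mathcomp Require Import all_boot zify.
Set Implicit Arguments. Unset Strict Implicit. Unset Printing Implicit Defensive.

(* Cutting two source-sink paths through all of X at their visits to X gives
   blocks that pairwise start and end at the same vertices, since acyclicity
   forces both paths to visit X in the same order.  Hence any choice of blocks
   from either path is again a source-sink path through X.  Uniform reading
   makes a variable occurring in block i of one such path occur in block i of
   every other (exchanging that single block would otherwise change its number
   of occurrences), so the parity colouring of the separating path governs the
   blocks of Q' and Q''.  Taking the blocks that may carry Y1 from Q' and the
   others from Q'' gives Q*: its Y1-literals are those of Q', its Y2-literals
   those of Q'', and every other variable is read with the sign fixed by S. *)

Section Splice.
Variable T : Type.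

Fixpoint splice (c : nat -> bool) (r1 r2 : seq (seq T)) : seq T :=
  match r1, r2 with
  | s1 :: r1', s2 :: r2' =>
      (if c 0 then s1 else s2) ++ splice (fun n => c n.+1) r1' r2'
  | _, _ => [::]
  end.

Lemma splice_all_l (c : nat -> bool) r1 r2 :
  size r1 = size r2 -> (forall j, c j) -> splice c r1 r2 = flatten r1.
Proof.
elim: r1 r2 c => [|s1 r1 IH] [|s2 r2] c //= [Hs] Hc.
by rewrite Hc (IH r2).
Qed.

Lemma count_splice_swap (a : pred T) (c : nat -> bool) r1 r2 i :
  size r1 = size r2 -> ~~ c i -> (forall j, j != i -> c j) ->
  count a (splice c r1 r2) + count a (nth [::] r1 i) =
  count a (flatten r1) + count a (nth [::] r2 i).
Proof.
elim: r1 r2 c i => [|s1 r1 IH] [|s2 r2] c i //= [Hs] Hci Hc.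
case: i Hci Hc => [|i] Hci Hc /=.
  by rewrite (negbTE Hci) !count_cat (splice_all_l Hs) //; [lia | move=> j; apply: Hc].
rewrite Hc // !count_cat -addnA (IH r2 _ i) ?addnA //.
by move=> j Hj; apply: Hc.
Qed.

End Splice.

Section SpliceMem.
Variable T : eqType.

Lemma flatten_nthP (r : seq (seq T)) x :
  reflect (exists i, x \in nth [::] r i) (x \in flatten r).
Proof.
apply: (iffP flattenP) => [[s /(nthP [::]) [i _ <-]] Hx|[i Hx]]; first by exists i.
exists (nth [::] r i) => //; apply: mem_nth.
by rewrite ltnNge; apply: contraL Hx => /(nth_default [::]) ->.
Qed.

Lemma mem_splice (c : nat -> bool) (r1 r2 : seq (seq T)) x : x \in splice c r1 r2 ->
  exists i, (c i && (x \in nth [::] r1 i)) || (~~ c i && (x \in nth [::] r2 i)).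
Proof.
elim: r1 r2 c => [|s1 r1 IH] [|s2 r2] c //=.
rewrite mem_cat => /orP[Hx|/IH[i Hi]]; last by exists i.+1.
by exists 0; case: (c 0) Hx => ->.
Qed.

Lemma mem_splice_l (c : nat -> bool) (r1 r2 : seq (seq T)) i x :
  size r1 = size r2 -> c i -> x \in nth [::] r1 i -> x \in splice c r1 r2.
Proof.
elim: r1 r2 c i => [|s1 r1 IH] [|s2 r2] c [|i] //= [Hs] Hc Hx; rewrite mem_cat.
  by rewrite Hc Hx.
by rewrite (IH r2 _ i) ?orbT.
Qed.

Lemma mem_splice_r (c : nat -> bool) (r1 r2 : seq (seq T)) i x :
  size r1 = size r2 -> ~~ c i -> x \in nth [::] r2 i -> x \in splice c r1 r2.
Proof.
elim: r1 r2 c i => [|s1 r1 IH] [|s2 r2] c [|i] //= [Hs] Hc Hx; rewrite mem_cat.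
  by rewrite (negbTE Hc) Hx.
by rewrite (IH r2 _ i) ?orbT.
Qed.

End SpliceMem.

Section Walks.
Variables (Var : finType) (Z : nbp Var).
Local Notation V := (vtx Z).
Local Notation E := (edge Z).
Local Notation heads p := (map (@hd _ Z) p).
Local Notation avoids X p := (all (fun e => @hd _ Z e \notin X) p).

Definition walk_end (u : V) (p : seq E) : V := last u (heads p).

Definition visits (X : {set V}) (p : seq E) : seq V := [seq v <- heads p | v \in X].

Lemma walk_cat u (p q : seq E) :
  is_walk u (p ++ q) = is_walk u p && is_walk (walk_end u p) q.
Proof. by elim: p u => [|e p IH] u //=; rewrite IH andbA. Qed.

Lemma walk_end_cat u (p q : seq E) : walk_end u (p ++ q) = walk_end (walk_end u p) q.
Proof. by rewrite /walk_end map_cat last_cat. Qed.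

Lemma walk_end_rcons u (p : seq E) e : walk_end u (rcons p e) = hd e.
Proof. by rewrite /walk_end map_rcons last_rcons. Qed.

Lemma walk_to_head v (p : seq E) y : is_walk v p -> y \in heads p ->
  exists w, [/\ w != [::], is_walk v w & walk_end v w = y].
Proof.
elim: p v => [|e p IH] v //= /andP[/eqP He Hw].
rewrite in_cons => /orP[/eqP->|/(IH _ Hw)[w [_ Hww <-]]].
  by exists [:: e]; rewrite /= He eqxx.
by exists (e :: w); rewrite /= He eqxx.
Qed.

Lemma visits_cat (X : {set V}) (p q : seq E) : visits X (p ++ q) = visits X p ++ visits X q.
Proof. by rewrite /visits map_cat filter_cat. Qed.

Lemma visits_avoids (X : {set V}) (p : seq E) : avoids X p -> visits X p = [::].
Proof. by rewrite /visits; elim: p => //= e p IH /andP[/negbTE-> /IH]. Qed.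

Lemma avoids_same_visits (X : {set V}) (p q : seq E) :
  visits X p =i visits X q -> avoids X p -> avoids X q.
Proof.
move=> Hv /visits_avoids Hp; apply/allP => e He; apply/negP => HeX.
have := Hv (hd e); rewrite Hp mem_filter HeX map_f //.
Qed.

Lemma first_visit (X : {set V}) (p : seq E) : ~~ avoids X p ->
  exists p1 e p2, [/\ p = p1 ++ e :: p2, avoids X p1 & hd e \in X].
Proof.
elim: p => [|e p IH] //=; case HeX: (hd e \in X) => /= Hp.
  by exists [::], e, p.
have [p1 [f [p2 [-> Hp1 Hf]]]] := IH Hp.
by exists (e :: p1), f, p2; rewrite /= HeX.
Qed.

Section FirstVisit.
Variables (X : {set V}) (p1 p2 : seq E) (e : E).
Hypotheses (Hp1 : avoids X p1) (He : hd e \in X).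

Lemma split_at_avoids (p : seq E) : avoids X p -> split_at X p = [:: p].
Proof. by elim: p => //= f p IH /andP[/negbTE-> /IH->]. Qed.

Lemma split_at_visit : split_at X (p1 ++ e :: p2) = rcons p1 e :: split_at X p2.
Proof. by elim: p1 Hp1 => [|f q IH] /=; [rewrite He | case/andP=> /negbTE-> /IH->]. Qed.

Lemma visits_visit : visits X (p1 ++ e :: p2) = hd e :: visits X p2.
Proof. by rewrite visits_cat visits_avoids // /visits /= He. Qed.

Lemma visits_rcons_visit : visits X (rcons p1 e) = [:: hd e].
Proof. by rewrite -cats1 visits_cat visits_avoids // /visits /= He. Qed.

Lemma walk_visit u :
  is_walk u (p1 ++ e :: p2) = is_walk u (rcons p1 e) && is_walk (hd e) p2.
Proof. by rewrite -cat_rcons walk_cat walk_end_rcons. Qed.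

Lemma walk_end_visit u : walk_end u (p1 ++ e :: p2) = walk_end (hd e) p2.
Proof. by rewrite -cat_rcons walk_end_cat walk_end_rcons. Qed.

End FirstVisit.

Lemma flatten_split_at (X : {set V}) (p : seq E) : flatten (split_at X p) = p.
Proof.
elim: p => [|e p IH] //=.
case: (hd e \in X) => /=; first by rewrite IH.
by move: IH; case: (split_at X p) => [|s r] /= <-.
Qed.

Fixpoint aligned (X : {set V}) (u : V) (r1 r2 : seq (seq E)) : bool :=
  match r1, r2 with
  | [::], [::] => u == snk Z
  | s1 :: r1', s2 :: r2' =>
      [&& is_walk u s1, is_walk u s2, walk_end u s1 == walk_end u s2,
          visits X s1 == visits X s2 & aligned X (walk_end u s1) r1' r2']
  | _, _ => false
  end.

Lemma aligned_size (X : {set V}) u (r1 r2 : seq (seq E)) :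
  aligned X u r1 r2 -> size r1 = size r2.
Proof.
by elim: r1 r2 u => [|s1 r1 IH] [|s2 r2] u //= /and5P[_ _ _ _ /IH->].
Qed.

Lemma walk_splice (X : {set V}) (c : nat -> bool) u (r1 r2 : seq (seq E)) :
  aligned X u r1 r2 ->
  is_walk u (splice c r1 r2) && (walk_end u (splice c r1 r2) == snk Z).
Proof.
elim: r1 r2 c u => [|s1 r1 IH] [|s2 r2] c u //= /and5P[Hw1 Hw2 /eqP He _ Hal].
rewrite walk_cat walk_end_cat.
by have := IH r2 (fun n => c n.+1) _ Hal; case: (c 0); rewrite ?Hw1 ?Hw2 -?He.
Qed.

Lemma visits_splice (X : {set V}) (c : nat -> bool) u (r1 r2 : seq (seq E)) :
  aligned X u r1 r2 -> visits X (splice c r1 r2) = visits X (flatten r1).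
Proof.
elim: r1 r2 c u => [|s1 r1 IH] [|s2 r2] c u //= /and5P[_ _ _ /eqP Hv Hal].
by rewrite !visits_cat (IH r2 _ _ Hal); case: (c 0); rewrite ?Hv.
Qed.

Lemma aligned_avoids (X : {set V}) u (p q : seq E) :
  avoids X p -> avoids X q -> is_walk u p -> is_walk u q ->
  walk_end u p = snk Z -> walk_end u q = snk Z ->
  aligned X u (split_at X p) (split_at X q).
Proof.
move=> Hp Hq Hwp Hwq Hep Heq.
by rewrite !split_at_avoids //= Hwp Hwq Hep Heq !visits_avoids //= !eqxx.
Qed.

Section Acyclic.
Hypothesis acyclic : forall (v : V) (p : seq E),
  is_walk v p -> last v (heads p) = v -> p = [::].

Lemma no_round_trip u v (p q : seq E) :
  is_walk u p -> is_walk v q -> v \in heads p -> u \in heads q -> False.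
Proof.
move=> /walk_to_head Hp /walk_to_head Hq /Hp[w1 [Hw1 Hww1 He1]] /Hq[w2 [_ Hww2 He2]].
have := @acyclic u (w1 ++ w2); rewrite walk_cat Hww1 He1 Hww2.
by rewrite -/(walk_end _ _) walk_end_cat He1 He2 => /(_ isT erefl); case: w1 Hw1 {Hww1 He1}.
Qed.

Lemma head_notin_walk v (p : seq E) : is_walk v p -> v \notin heads p.
Proof.
move=> Hw; apply/negP => /(walk_to_head Hw)[w [Hw0 Hww He]].
by move: Hw0; rewrite (acyclic Hww He).
Qed.

Lemma same_visits_cons (X : {set V}) u v (p q : seq E) :
  is_walk u p -> is_walk v q -> u :: visits X p =i v :: visits X q ->
  u = v /\ visits X p =i visits X q.
Proof.
move=> Hp Hq Huv.
have Huv_eq : u = v.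
  apply/eqP; apply: contraT => Hne.
  have := Huv u; have := Huv v; rewrite !inE !eqxx eq_sym (negbTE Hne) /= !mem_filter.
  by case/andP=> _ Hvp /esym/andP[_ Huq]; case: (no_round_trip Hp Hq Hvp Huq).
split=> // x; subst v; have := Huv x; rewrite !inE.
have [->|] //= := eqVneq x u.
by rewrite !mem_filter (negbTE (head_notin_walk Hp)) (negbTE (head_notin_walk Hq)) !andbF.
Qed.

Lemma aligned_split_at (X : {set V}) u (p q : seq E) :
  is_walk u p -> is_walk u q -> walk_end u p = snk Z -> walk_end u q = snk Z ->
  visits X p =i visits X q -> aligned X u (split_at X p) (split_at X q).
Proof.
elim: {p}(size p).+1 {-2}p (ltnSn (size p)) u q => // n IH p Hs u q Hwp Hwq Hep Heq Hv.
have [Hp|Hp] := boolP (avoids X p).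
  by apply: aligned_avoids => //; apply: avoids_same_visits Hp.
have [Hq|Hq] := boolP (avoids X q).
  by case/negP: Hp; apply: (avoids_same_visits (fun x => esym (Hv x))).
have [p1 [e [p2 [Ep Hp1 He]]]] := first_visit Hp.
have [q1 [f [q2 [Eq Hq1 Hf]]]] := first_visit Hq.
subst p q; move: Hwp Hwq Hep Heq Hv.
rewrite !walk_visit // !walk_end_visit // !visits_visit //.
move=> /andP[Hw1 Hw2] /andP[Hw1' Hw2'] Hep Heq Hv.
have [Hef Hv2] := same_visits_cons Hw2 Hw2' Hv.
rewrite !split_at_visit //= Hw1 Hw1' !walk_end_rcons !visits_rcons_visit // Hef !eqxx /=.
apply: IH => //; rewrite -?Hef //.
by move: Hs; rewrite size_cat /=; lia.
Qed.

End Acyclic.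

End Walks.

Section Paths.
Variables (Var : finType) (Z : nbp Var).
Local Notation V := (vtx Z).
Local Notation E := (edge Z).
Local Notation has_var x p := (has (fun e => var_of e == Some x) p).

Lemma litsP (p : seq E) l :
  reflect (exists2 e, e \in p & lab e = Some l) (l \in lits p).
Proof. by rewrite inE; apply: (iffP hasP) => [[e He /eqP]|[e He Hl]]; exists e; rewrite ?Hl. Qed.

Lemma computational_sign (p : seq E) x b b' :
  computational p -> (x, b) \in lits p -> (x, b') \in lits p -> b = b'.
Proof.
move=> /forallP/(_ x) Hc; case: b b' => [] [] // H1 H2.
  by move: Hc; rewrite H1 H2.
by move: Hc; rewrite H1 H2.
Qed.

Lemma has_var_lits (p : seq E) x :
  has_var x p = ((x, true) \in lits p) || ((x, false) \in lits p).
Proof.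
rewrite !inE -has_predU; apply: eq_has => e /=; rewrite /var_of.
by case: (lab e) => [[y [] ]|] //=; rewrite !(inj_eq Some_inj) ?xpair_eqE ?andbT ?andbF ?orbF.
Qed.

Lemma var_in_Vars (e : E) x : var_of e = Some x -> x \in Vars Z.
Proof. by move=> He; rewrite inE; apply/existsP; exists e; rewrite He. Qed.

Lemma lits_var_in_Vars (p : seq E) x b : (x, b) \in lits p -> x \in Vars Z.
Proof. by case/litsP => e _ He; apply: (@var_in_Vars e); rewrite /var_of He. Qed.

Lemma through_eq_visits (X : {set V}) (p q : seq E) :
  visits X p = visits X q -> through X p = through X q.
Proof.
move=> Hv; have Hm r x : x \in X -> (x \in map (@hd _ Z) r) = (x \in visits X r).
  by move=> Hx; rewrite mem_filter Hx.
by apply/forall_inP/forall_inP => Ht x Hx; move: (Ht x Hx); rewrite !inE !(Hm _ _ Hx) Hv.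
Qed.

Lemma aligned_st_paths (X : {set V}) (p q : seq E) :
  nbp_wf Z -> src Z \notin X -> st_path p -> st_path q -> through X p -> through X q ->
  aligned X (src Z) (split_at X p) (split_at X q).
Proof.
move=> [Hac _] HsX /andP[Hwp /eqP Hep] /andP[Hwq /eqP Heq] Htp Htq.
apply: aligned_split_at => // x; rewrite !mem_filter.
have [HxX|] //= := boolP (x \in X).
have Hxs : x != src Z by apply: contraNneq HsX => <-.
move/forall_inP: Htp => /(_ x HxX); move/forall_inP: Htq => /(_ x HxX).
by rewrite !inE (negbTE Hxs) /= => -> ->.
Qed.

Definition block_coloured (X : {set V}) (c : nat -> bool) (p : seq E)
    (A B : {set Var}) : Prop :=
  forall i e, e \in nth [::] (split_at X p) i -> forall x, var_of e = Some x ->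
    (x \in A -> c i) /\ (x \in B -> ~~ c i).

Lemma separates_coloured (X : {set V}) (Y1 Y2 : {set Var}) : separates X Y1 Y2 ->
  exists P c, [/\ st_path P, through X P & block_coloured X c P Y1 Y2].
Proof.
case=> _ [_ [P [HP _ HXP [Hoe|Hoe]]]]; exists P.
  by exists (fun i => odd i.+1).
exists (fun i => ~~ odd i.+1); split=> // i e He x Hx.
by have [H2 H1] := Hoe i e He x Hx; rewrite negbK.
Qed.

Section UniformRead.
Variable d : nat.
Hypothesis read : uniform_read Z d.

Lemma uniform_read_has (p q : seq E) x : st_path p -> st_path q -> x \in Vars Z ->
  has_var x p = has_var x q.
Proof. by move=> Hp Hq Hx; rewrite !has_count (read Hp Hx) (read Hq Hx). Qed.

Lemma block_var_transfer (X : {set V}) (P Q : seq E) i e x :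
  st_path P -> aligned X (src Z) (split_at X P) (split_at X Q) ->
  e \in nth [::] (split_at X Q) i -> var_of e = Some x ->
  has_var x (nth [::] (split_at X P) i).
Proof.
move=> HP Hal He Hx; apply: contraT; rewrite has_count -leqNgt leqn0 => /eqP HPi.
have HxV := var_in_Vars Hx.
have HQi : 0 < count (fun f => var_of f == Some x) (nth [::] (split_at X Q) i).
  by rewrite -has_count; apply/hasP; exists e; rewrite ?Hx.
have HM := read (walk_splice (fun j => j != i) Hal) HxV.
have := count_splice_swap (fun f => var_of f == Some x) (aligned_size Hal).
move=> /(_ (fun j => j != i) i); rewrite eqxx flatten_split_at HM HPi (read HP HxV).
by move=> /(_ isT (fun j => id)); lia.
Qed.

Lemma block_coloured_transfer (X : {set V}) c (P Q : seq E) A B :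
  st_path P -> aligned X (src Z) (split_at X P) (split_at X Q) ->
  block_coloured X c P A B -> block_coloured X c Q A B.
Proof.
move=> HP Hal Hc i e He x Hx.
have /hasP[f Hf /eqP Hfx] := block_var_transfer HP Hal He Hx.
exact: Hc Hf x Hfx.
Qed.

End UniformRead.

End Paths.

Section ColouredSplice.
Variables (Var : finType) (Z : nbp Var).
Variables (X : {set vtx Z}) (Y1 Y2 : {set Var}) (c : nat -> bool) (Q1 Q2 : seq (edge Z)).
Variables (S : {set literal Var}) (d : nat).
Hypotheses (aligned12 : aligned X (src Z) (split_at X Q1) (split_at X Q2))
  (col1 : block_coloured X c Q1 Y1 Y2) (col2 : block_coloured X c Q2 Y1 Y2).
Local Notation M := (splice c (split_at X Q1) (split_at X Q2)).
Local Notation has_var x p := (has (fun e => var_of e == Some x) p).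

Lemma st_path_splice : st_path M.
Proof. exact: walk_splice aligned12. Qed.

Lemma through_splice : through X M = through X Q1.
Proof. by apply: through_eq_visits; rewrite (visits_splice _ aligned12) flatten_split_at. Qed.

Lemma mem_split_at (p : seq (edge Z)) e :
  reflect (exists i, e \in nth [::] (split_at X p) i) (e \in p).
Proof. by rewrite -{2}(flatten_split_at X p); apply: flatten_nthP. Qed.

Lemma lits_splice l : l \in lits M -> (l \in lits Q1) || (l \in lits Q2).
Proof.
case/litsP=> f Hf Hl; have [i /orP[/andP[_ Hfi]|/andP[_ Hfi]]] := mem_splice Hf.
  by apply/orP; left; apply/litsP; exists f => //; apply/mem_split_at; exists i.
by apply/orP; right; apply/litsP; exists f => //; apply/mem_split_at; exists i.
Qed.

Lemma lits_splice_l x b : x \in Y1 -> ((x, b) \in lits M) = ((x, b) \in lits Q1).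
Proof.
move=> Hx; apply/litsP/litsP => [[f Hf Hl]|[f /mem_split_at[i Hfi] Hl]];
    have Hv : var_of f = Some x by rewrite /var_of Hl.
- have [i /orP[/andP[_ Hfi]|/andP[Hci Hfi]]] := mem_splice Hf.
  + by exists f => //; apply/mem_split_at; exists i.
  + by move: Hci; rewrite ((col2 Hfi Hv).1 Hx).
- exists f => //; exact: mem_splice_l (aligned_size aligned12) ((col1 Hfi Hv).1 Hx) Hfi.
Qed.

Lemma lits_splice_r x b : x \in Y2 -> ((x, b) \in lits M) = ((x, b) \in lits Q2).
Proof.
move=> Hx; apply/litsP/litsP => [[f Hf Hl]|[f /mem_split_at[i Hfi] Hl]];
    have Hv : var_of f = Some x by rewrite /var_of Hl.
- have [i /orP[/andP[Hci Hfi]|/andP[_ Hfi]]] := mem_splice Hf.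
  + by move: ((col1 Hfi Hv).2 Hx); rewrite Hci.
  + by exists f => //; apply/mem_split_at; exists i.
- exists f => //; exact: mem_splice_r (aligned_size aligned12) ((col2 Hfi Hv).2 Hx) Hfi.
Qed.

Hypotheses (comp1 : computational Q1) (comp2 : computational Q2)
  (assignS : is_assignment S (Vars Z :\: (Y1 :|: Y2)))
  (S_sub : S \subset lits Q1 :&: lits Q2).

Lemma lits_splice_sign x b b0 : (x, b) \in lits M -> (x, b0) \in S -> b = b0.
Proof.
move=> Hl /(subsetP S_sub)/setIP[H1 H2].
case/orP: (lits_splice Hl) => H; first exact: computational_sign comp1 H H1.
exact: computational_sign comp2 H H2.
Qed.

Lemma computational_splice : computational M.
Proof.
apply/forallP => x; apply/negP => /andP[Ht Hf].
have [Hx1|Hx1] := boolP (x \in Y1).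
  by rewrite !lits_splice_l // in Ht Hf; have := computational_sign comp1 Ht Hf.
have [Hx2|Hx2] := boolP (x \in Y2).
  by rewrite !lits_splice_r // in Ht Hf; have := computational_sign comp2 Ht Hf.
have HxW : x \in Vars Z :\: (Y1 :|: Y2).
  by rewrite in_setD in_setU negb_or Hx1 Hx2 (lits_var_in_Vars Ht).
case: assignS => _ [/(_ x HxW)/orP[]HS _].
  by have := lits_splice_sign Hf HS.
by have := lits_splice_sign Ht HS.
Qed.

Lemma assignment_sub_splice :
  uniform_read Z d -> st_path Q1 -> S \subset lits M.
Proof.
move=> read HQ1; apply/subsetP => -[x b] HS.
have /setDP[HxV _] : x \in Vars Z :\: (Y1 :|: Y2) by case: assignS => /(_ _ HS).
have HxQ1 : (x, b) \in lits Q1 by have /setIP[] := subsetP S_sub _ HS.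
have : has_var x M.
  rewrite (uniform_read_has read st_path_splice HQ1 HxV) has_var_lits.
  by case: b HxQ1 {HS} => ->; rewrite ?orbT.
by rewrite (has_var_lits M) => /orP[] H; rewrite -(lits_splice_sign H HS).
Qed.

End ColouredSplice.

Theorem lemma6 (Var : finType) (Z : nbp Var) (d : nat)
  (HZ : nbp_wf Z) (Hread : uniform_read Z d)
  (X : {set vtx Z}) (Y1 Y2 : {set Var})
  (HY1 : Y1 \subset Vars Z) (HY2 : Y2 \subset Vars Z)
  (HY12 : [disjoint Y1 & Y2])
  (Hsep : separates X Y1 Y2)
  (Y1' Y2' : {set Var}) (HY1' : Y1' \subset Y1) (HY2' : Y2' \subset Y2)
  (S : {set literal Var})
  (HS : is_assignment S (Vars Z :\: (Y1 :|: Y2)))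
  (Q' Q'' : seq (edge Z))
  (HQ' : st_path Q') (HcQ' : computational Q') (HXQ' : through X Q')
  (HQ'' : st_path Q'') (HcQ'' : computational Q'') (HXQ'' : through X Q'')
  (HSQ : S \subset lits Q' :&: lits Q'')
  (HnegQ' : forall y, y \in Y1' -> assigns_neg Q' y)
  (HnegQ'' : forall y, y \in Y2' -> assigns_neg Q'' y) :
  exists Qs : seq (edge Z),
    [/\ st_path Qs, computational Qs, through X Qs, S \subset lits Qs &
      forall y, y \in Y1' :|: Y2' -> assigns_neg Qs y].
Proof.
have HsX : src Z \notin X by case: Hsep.
have [P [c [HP HXP HcP]]] := separates_coloured Hsep.
have Hal := aligned_st_paths HZ HsX.
have Hc1 := block_coloured_transfer Hread HP (Hal _ _ HP HQ' HXP HXQ') HcP.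
have Hc2 := block_coloured_transfer Hread HP (Hal _ _ HP HQ'' HXP HXQ'') HcP.
have Hal12 := Hal _ _ HQ' HQ'' HXQ' HXQ''.
exists (splice c (split_at X Q') (split_at X Q'')); split.
- exact: st_path_splice Hal12.
- exact: computational_splice Hal12 Hc1 Hc2 HcQ' HcQ'' HS HSQ.
- by rewrite (through_splice c Hal12).
- exact: (assignment_sub_splice c Hal12 HcQ' HcQ'' HS HSQ Hread HQ').
move=> y /setUP[Hy|Hy]; rewrite /assigns_neg.
  by rewrite (lits_splice_l Hal12 Hc1 Hc2 _ (subsetP HY1' _ Hy)); apply: HnegQ'.
by rewrite (lits_splice_r Hal12 Hc1 Hc2 _ (subsetP HY2' _ Hy)); apply: HnegQ''.
Qed.
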